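(* Let $t_0\in\mathbb{R}$, $q_0\ge0$, $\mu>0$, $\alpha>0$, let $X:[t_0,+\infty)\to[0,+\infty)$ be continuous, and let $q$ solve $$q'(t)=X(t)-\Big[\mu+e^{-\alpha q(t)}\big(\min\{\mu,X(t)\}-\mu\big)\Big],\qquad q(t_0)=q_0.$$ Suppose there exist $t_X>t_0$ and $X_\infty<\mu$ with $X(t)\le X_\infty$ for all $t\ge t_X$, and let $q_X=q(t_X)>0$. For $0<\epsilon\le q_X$ define the emptying time $T_\epsilon(q_X)=\inf\{t\ge t_X: q(t)\le\epsilon\}$. Then $$T_\epsilon(q_X)\le t_X+\frac{q_X-\epsilon}{\mu-X_\infty}+\frac{1}{\alpha(\mu-X_\infty)}\log\!\Big(\frac{q_X}{\epsilon}\Big).$$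
   Context: This ODE is the logistic queue model: $q$ is the queue size, $X$ the inflow, $\mu>0$ the maximum outflow rate and $\alpha>0$ a fixed model parameter. *)

From Stdlib Require Import Reals.
Open Scope R_scope.

Definition queue_rhs (mu alpha x qv : R) : R :=
  x - (mu + exp (- alpha * qv) * (Rmin mu x - mu)).

Definition is_inf (E : R -> Prop) (m : R) : Prop :=
  (forall x, E x -> m <= x) /\
  (forall b, (forall x, E x -> b <= x) -> b <= m).

(** Along the trajectory, as long as [q > 0] and [X <= X_inf], the Lyapunov
    function [V t = q t + ln (q t) / alpha + (mu - X_inf) t] is nonincreasing,
    because [1 - exp (-a) >= a / (1 + a)]. If [q] stayed above [eps] on
    [[tX, T]], comparing [V T] with [V tX] and using [q T > eps] forces [T] to
    be below the claimed bound; so [q] reaches [eps] before that bound, and the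
    infimum of the hitting set is no larger. *)

From Stdlib Require Import Reals Lra Classical.
Open Scope R_scope.

Lemma ln_le_ln x y : 0 < x -> x <= y -> ln x <= ln y.
Proof.
  intros Hx [Hlt | <-]; [left; apply ln_increasing; assumption | right; reflexivity].
Qed.

Lemma ln_div x y : 0 < x -> 0 < y -> ln (x / y) = ln x - ln y.
Proof.
  intros Hx Hy. unfold Rdiv.
  rewrite ln_mult, ln_Rinv; [ring | assumption | assumption | apply Rinv_0_lt_compat; assumption].
Qed.

Lemma is_inf_exists (E : R -> Prop) (m : R) :
  (exists x, E x) -> (forall x, E x -> m <= x) -> exists T, is_inf E T.
Proof.
  intros [x Ex] Hlow.
  destruct (completeness (fun y => E (- y))) as [s [Hub Hlub]].
  - exists (- m). intros y Ey. specialize (Hlow _ Ey). lra.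
  - exists (- x). rewrite Ropp_involutive. exact Ex.
  - exists (- s). split.
    + intros y Ey. enough (- y <= s) by lra.
      apply Hub. rewrite Ropp_involutive. exact Ey.
    + intros b Hb. enough (s <= - b) by lra.
      apply Hlub. intros y Ey. specialize (Hb _ Ey). lra.
Qed.

Lemma derivative_nonpos_antitone (f f' : R -> R) (a b : R) :
  a <= b ->
  (forall c, a <= c <= b -> derivable_pt_lim f c (f' c)) ->
  (forall c, a <= c <= b -> f' c <= 0) ->
  f b <= f a.
Proof.
  intros [Hab | <-] Hder Hneg; [|lra].
  destruct (MVT_cor2 f f' a b Hab Hder) as [c [Hmvt Hc]].
  assert (f' c <= 0) by (apply Hneg; lra).
  nra.
Qed.

Lemma queue_rhs_underloaded mu alpha x qv :
  x <= mu -> queue_rhs mu alpha x qv = (x - mu) * (1 - exp (- alpha * qv)).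
Proof. intros Hx. unfold queue_rhs. rewrite Rmin_right by lra. ring. Qed.

Lemma one_le_one_sub_exp_neg_mul a : 0 < a -> 1 <= (1 - exp (- a)) * (1 + / a).
Proof.
  intros Ha.
  assert (Hexp : 1 + a < exp a) by (apply exp_ineq1; lra).
  assert (Hinv : exp (- a) * exp a = 1)
    by (rewrite <- exp_plus, Rplus_opp_l; exact exp_0).
  assert (Hpos : 0 < exp (- a)) by apply exp_pos.
  (* This is the claim, minus [1], times [a]. *)
  assert (Hbound : exp (- a) * (1 + a) <= 1) by nra.
  replace ((1 - exp (- a)) * (1 + / a))
    with (1 + (1 - exp (- a) * (1 + a)) * / a) by (field; lra).
  assert (0 <= (1 - exp (- a) * (1 + a)) * / a).
  { apply Rmult_le_pos; [lra | left; apply Rinv_0_lt_compat; lra]. }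
  lra.
Qed.

Lemma queue_rhs_lyapunov_le mu alpha Xinf x qv :
  0 < alpha -> Xinf < mu -> x <= Xinf -> 0 < qv ->
  queue_rhs mu alpha x qv * (1 + / alpha * / qv) <= - (mu - Xinf).
Proof.
  intros Ha Hmu Hx Hq.
  rewrite queue_rhs_underloaded by lra.
  pose proof (one_le_one_sub_exp_neg_mul (alpha * qv) ltac:(nra)) as Hone.
  rewrite Ropp_mult_distr_l, Rinv_mult in Hone.
  assert (Hfac : 0 <= 1 - exp (- alpha * qv)).
  { rewrite <- exp_0. enough (exp (- alpha * qv) < exp 0) by lra.
    apply exp_increasing. nra. }
  assert (Hsum : 0 <= 1 + / alpha * / qv).
  { enough (0 < / alpha * / qv) by lra.
    apply Rmult_lt_0_compat; apply Rinv_0_lt_compat; lra. }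
  nra.
Qed.

Definition queue_lyapunov (alpha C : R) (q : R -> R) (t : R) : R :=
  q t + / alpha * ln (q t) + C * t.

Lemma queue_lyapunov_derivative (q : R -> R) alpha C c d :
  0 < q c -> derivable_pt_lim q c d ->
  derivable_pt_lim (queue_lyapunov alpha C q) c
    (d * (1 + / alpha * / q c) + C).
Proof.
  intros Hqc Hd.
  pose proof (derivable_pt_lim_comp q ln c _ _ Hd (derivable_pt_lim_ln _ Hqc)) as Hln.
  pose proof (derivable_pt_lim_plus _ _ c _ _ Hd
                 (derivable_pt_lim_scal _ (/ alpha) c _ Hln)) as Hsum.
  pose proof (derivable_pt_lim_scal _ C c _ (derivable_pt_lim_id c)) as Hlin.
  replace (d * (1 + / alpha * / q c) + C)
    with (d + / alpha * (/ q c * d) + C * 1) by ring.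
  exact (derivable_pt_lim_plus _ _ c _ _ Hsum Hlin).
Qed.

Section Emptying.

Variables (mu alpha Xinf tX eps : R) (X q : R -> R).
Hypothesis Halpha : 0 < alpha.
Hypothesis HXinf : Xinf < mu.
Hypothesis Heps : 0 < eps.
Hypothesis HXbound : forall t, tX <= t -> X t <= Xinf.
Hypothesis Hode :
  forall t, tX <= t -> derivable_pt_lim q t (queue_rhs mu alpha (X t) (q t)).

Let emptying_bound :=
  tX + (q tX - eps) / (mu - Xinf) + / (alpha * (mu - Xinf)) * ln (q tX / eps).

Lemma above_level_before_bound T :
  tX <= T -> (forall t, tX <= t <= T -> eps < q t) -> T < emptying_bound.
Proof.
  intros HT Habove.
  set (C := mu - Xinf).
  assert (HVdecr : queue_lyapunov alpha C q T <= queue_lyapunov alpha C q tX).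
  { apply (derivative_nonpos_antitone (queue_lyapunov alpha C q)
             (fun t => queue_rhs mu alpha (X t) (q t) * (1 + / alpha * / q t) + C));
      [exact HT | intros c Hc; assert (eps < q c) by (apply Habove; exact Hc) ..].
    - apply queue_lyapunov_derivative; [lra | apply Hode; lra].
    - enough (queue_rhs mu alpha (X c) (q c) * (1 + / alpha * / q c) <= - C) by lra.
      apply queue_rhs_lyapunov_le; [exact Halpha | exact HXinf | apply HXbound; lra | lra]. }
  assert (HqT : eps < q T) by (apply Habove; lra).
  assert (HlnT : ln eps < ln (q T)) by (apply ln_increasing; lra).
  assert (HqX : eps < q tX) by (apply Habove; lra).
  unfold emptying_bound. fold C.
  rewrite ln_div by lra.
  assert (HC : 0 < C) by (unfold C; lra).
  assert (Hia : 0 < / alpha) by (apply Rinv_0_lt_compat; lra).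
  unfold queue_lyapunov in HVdecr.
  apply (Rmult_lt_reg_l C); [exact HC |].
  replace (C * (tX + (q tX - eps) / C + / (alpha * C) * (ln (q tX) - ln eps)))
    with (C * tX + (q tX - eps) + / alpha * (ln (q tX) - ln eps)) by (field; lra).
  nra.
Qed.

Lemma reaches_level_before_bound :
  eps <= q tX -> exists t, tX <= t <= emptying_bound /\ q t <= eps.
Proof.
  intros HqX.
  assert (Hstart : tX <= emptying_bound).
  { unfold emptying_bound.
    assert (HC : 0 < mu - Xinf) by lra.
    assert (0 <= (q tX - eps) / (mu - Xinf)).
    { apply Rmult_le_pos; [lra | left; apply Rinv_0_lt_compat; lra]. }
    assert (0 <= / (alpha * (mu - Xinf)) * ln (q tX / eps)).
    { apply Rmult_le_pos.
      - left. apply Rinv_0_lt_compat. nra.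
      - rewrite ln_div by lra.
        enough (ln eps <= ln (q tX)) by lra.
        apply ln_le_ln; lra. }
    lra. }
  apply NNPP. intros Hnever.
  enough (emptying_bound < emptying_bound) by lra.
  apply above_level_before_bound; [exact Hstart |].
  intros t Ht. apply Rnot_le_lt. intros Hle. apply Hnever. exists t. auto.
Qed.

End Emptying.

Theorem mainTheorem4
  (t0 q0 mu alpha : R) (X q : R -> R)
  (Hq0 : 0 <= q0) (Hmu : 0 < mu) (Halpha : 0 < alpha)
  (HXnn : forall t, t0 <= t -> 0 <= X t)
  (HXcont : forall t, t0 <= t -> limit1_in X (fun s => t0 <= s) (X t) t)
  (Hqcont0 : limit1_in q (fun s => t0 <= s) q0 t0)
  (Hode : forall t, t0 < t -> derivable_pt_lim q t (queue_rhs mu alpha (X t) (q t)))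
  (Hinit : q t0 = q0)
  (tX Xinf : R) (HtX : t0 < tX) (HXinf : Xinf < mu)
  (HXbound : forall t, tX <= t -> X t <= Xinf)
  (HqX : 0 < q tX)
  (eps : R) (Heps : 0 < eps) (HepsqX : eps <= q tX) :
  exists T : R,
    is_inf (fun t => tX <= t /\ q t <= eps) T /\
    T <= tX + (q tX - eps) / (mu - Xinf)
           + / (alpha * (mu - Xinf)) * ln (q tX / eps).
Proof.
  (* Only the dynamics after [tX] matter: the data on [[t0, tX)] is unused. *)
  assert (HodeX : forall t, tX <= t ->
            derivable_pt_lim q t (queue_rhs mu alpha (X t) (q t)))
    by (intros t Ht; apply Hode; lra).
  destruct (reaches_level_before_bound mu alpha Xinf tX eps X q
              Halpha HXinf Heps HXbound HodeX HepsqX) as [ts [Hts Hqts]].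
  destruct (is_inf_exists (fun t => tX <= t /\ q t <= eps) tX)
    as [T [HTlow HTglb]].
  - exists ts. split; [lra | exact Hqts].
  - intros t [Ht _]. exact Ht.
  - exists T. split; [split; assumption |].
    enough (T <= ts) by lra.
    apply HTlow. split; [lra | exact Hqts].
Qed.
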